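(* Let $u_1,\dots,u_n$ be words over $[n]$ with $u_j\in[n]^{k_j}$ ($k_j\geq0$). Then \[ P\left(\begin{bmatrix}e_{u_1}\\ \vdots\\ e_{u_n}\end{bmatrix}\right)=\sum_{j=1}^n\frac{\delta^l(l_{ju_j})[1\oplus\cdots\oplus1]}{k_j+1}, \] where $P$ is the orthogonal projection of $\mathcal{F}(\mathbb{C}^n)^n$ onto the closure of $\delta^l(\mathbb{C}^l_{\langle n\rangle})[1\oplus\cdots\oplus1]$ and $ju_j$ denotes the word obtained by prefixing the letter $j$ to $u_j$.
   Context: Let $\{e_1,\dots,e_n\}$ be an orthonormal basis of $\mathbb{C}^n$, $\{f_1,\dots,f_n\}$ the standard basis. The full Fock space is $\mathcal{F}(\mathbb{C}^n)=\mathbb{C}1\oplus\bigoplus_{k\geq1}(\mathbb{C}^n)^{\otimes k}$; for a word $w=i_1\cdots i_k$ over $[n]=\{1,\dots,n\}$, $e_w=e_{i_1}\otimes\cdots\otimes e_{i_k}$, $e_\epsilon=1$ for the empty word; $[n]^k$ is the set of words of length $k$. Let $l_je_w=e_{jw}$ be the left creation operators and $l_u=l_{u_1}\cdots l_{u_p}$ for $u=u_1\cdots u_p$. Let $\mathbb{C}^l_{\langle n\rangle}$ be the unital algebra generated by $l_1,\dots,l_n$, and $\delta^l:\mathbb{C}^l_{\langle n\rangle}\to(\mathbb{C}^l_{\langle n\rangle})^n\cong\mathbb{C}^l_{\langle n\rangle}\otimes\mathbb{C}^n$ the linear map with $\delta^l(l_{i_1}\cdots l_{i_p})=\sum_{j=1}^p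 l_{i_{j+1}}\cdots l_{i_p}l_{i_1}\cdots l_{i_{j-1}}\otimes f_{i_j}$. For a tuple $(x_1,\dots,x_n)$ of operators, $(x_1,\dots,x_n)[1\oplus\cdots\oplus1]=(x_11,\dots,x_n1)\in\mathcal{F}(\mathbb{C}^n)^n$, and $\delta^l(\mathbb{C}^l_{\langle n\rangle})[1\oplus\cdots\oplus1]$ is the set of all such images of $\delta^l(q)$, $q\in\mathbb{C}^l_{\langle n\rangle}$. Vectors of $\mathcal{F}(\mathbb{C}^n)^n$ are identified with $\mathcal{F}(\mathbb{C}^n)\otimes\mathbb{C}^n$ via $(\xi_1,\dots,\xi_n)\mapsto\sum_j\xi_j\otimes f_j$. *)

(* Complex scalars: any numClosedFieldType C (e.g. algC, or
   complex numbers); only ring operations, conjugation and the real order on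
   C are used. *)
From mathcomp Require Import all_boot all_order all_algebra.
Set Implicit Arguments. Unset Strict Implicit. Unset Printing Implicit Defensive.
Import Order.TTheory GRing.Theory Num.Theory.
Local Open Scope ring_scope.

Section Fock.
Variables (C : numClosedFieldType) (n : nat).

(* A vector of the full Fock space F(C^n), given by its coordinates on the
   orthonormal basis (e_w)_w indexed by words w over [n] = 'I_n. *)
Definition fock := seq 'I_n -> C.

Definition fvec := 'I_n -> fock.

Definition ebasis (w : seq 'I_n) : fock := fun w' => (w' == w)%:R.
Definition vac : fock := ebasis [::].

(* left creation operator l_j : e_w |-> e_{jw} *)
Definition lcre (j : 'I_n) (xi : fock) : fock :=
  fun w' => match w' with
            | [::] => 0
            | j' :: w'' => if j' == j then xi w'' else 0
            end.

Definition lword (u : seq 'I_n) (xi : fock) : fock := foldr lcre xi u.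

(* delta^l(l_{i_1} ... l_{i_p}) [1 (+) ... (+) 1]
   = sum_{k} (l_{i_{k+1}..i_p} l_{i_1..i_{k-1}} 1) (x) f_{i_k}
   (0-based index k below).  The i-th component collects the terms with
   i_k = i. *)
Definition deltal1 (w : seq 'I_n) : fvec :=
  fun i => fun w' =>
    \sum_(k < size w | nth i w k == i) lword (drop k.+1 w) (lword (take k w) vac) w'.

(* delta^l(C^l_<n>) [1 (+) ... (+) 1] : images of delta^l(q) for
   q = sum_{w in s} c_w l_w an arbitrary element of the algebra generated by
   the l_j (the monomials l_w span it), using linearity of delta^l. *)
Definition deltal_image (v : fvec) : Prop :=
  exists (s : seq (seq 'I_n)) (c : seq 'I_n -> C),
    forall i w', v i w' = \sum_(p <- s) c p * deltal1 p i w'.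

Definition bounded (N : nat) (v : fvec) : Prop :=
  forall i (w : seq 'I_n), (N <= size w)%N -> v i w = 0.
Definition fin_supp (v : fvec) : Prop := exists N, bounded N v.

(* inner product of F(C^n)^n, computed on words of length < N
   (exact as soon as N bounds the supports) *)
Definition ipN (N : nat) (v v' : fvec) : C :=
  \sum_(i < n) \sum_(k < N) \sum_(t : k.-tuple 'I_n) v i t * (v' i t)^*.

Definition vsub (v v' : fvec) : fvec := fun i w => v i w - v' i w.

(* y = P x, where P is the orthogonal projection onto the closure of the
   subspace S: y lies in the (norm) closure of S and x - y is orthogonal to S.
   (Stated for finitely supported x, y, S; all inner products/norms are then
   finite sums.) *)
Definition is_orthproj_closure (S : fvec -> Prop) (x y : fvec) : Prop :=
  [/\ fin_supp x, fin_supp y,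
      (forall eps : C, 0 < eps -> exists s, S s /\ fin_supp s /\
          forall N, bounded N s -> bounded N y -> ipN N (vsub y s) (vsub y s) < eps)
    & (forall s, S s -> fin_supp s /\
          forall N, bounded N s -> bounded N x -> bounded N y ->
            ipN N (vsub x y) s = 0)].

Definition xvec (u : 'I_n -> seq 'I_n) : fvec := fun j => ebasis (u j).

End Fock.

(* Read a vector (xi_i)_i of F(C^n)^n as the function i t |-> <xi_i, e_t> on
   nonempty words.  Then delta^l(l_p)[1 + ... + 1] is the sum of the indicators
   of the cyclic rotations of p, so v is orthogonal to the image of delta^l
   exactly when all cyclic sums of v vanish, and the projection averages over
   rotations.  The right-hand side is the rotation average of x = sum_j e_{j u_j}:
   it lies in the image of delta^l, and counting the pairs of agreeing rotations
   of two words shows that it has the same cyclic sums as x. *)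
From mathcomp Require Import all_boot all_order all_algebra zify.
Import Order.TTheory GRing.Theory Num.Theory.
Local Open Scope ring_scope.

Section CyclicSums.
Variables (R : pzSemiRingType) (T : eqType).

Definition cyclic_sum (f : seq T -> R) (p : seq T) : R :=
  \sum_(r < size p) f (rot r p).

Lemma rotD_ord m (a b : 'I_m.+1) (s : seq T) :
  size s = m.+1 -> rot a (rot b s) = rot (a + b)%R s.
Proof.
move=> size_s; have lt_a := ltn_ord a; have lt_b := ltn_ord b.
rewrite rot_add_mod ?size_s; [|exact: ltnW|exact: ltnW].
have -> : nat_of_ord (a + b)%R = ((a + b) %% m.+1)%N by [].
case: ifP => le_ab.
  have [eq_ab|lt_ab] := eqVneq (a + b)%N m.+1.
    by rewrite eq_ab modnn rot0 -size_s rot_size.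
  by rewrite modn_small //; lia.
have {2}-> : (a + b = (a + b - m.+1) + m.+1)%N by lia.
by rewrite modnDr modn_small //; lia.
Qed.

(* Counting the pairs (r', r) with rot r' p = rot r w: for each r' there are as
   many r as rotations of p equal to w, since rotations form the group Z/|w|. *)
Lemma cyclic_sum_rot_orbit (p w : seq T) :
  cyclic_sum (fun v => \sum_(r < size w) (v == rot r w)%:R) p
  = (size w)%:R * cyclic_sum (fun v => (v == w)%:R) p.
Proof.
rewrite /cyclic_sum.
have [size_pw|size_pw] := eqVneq (size p) (size w); last first.
  have rot_neq r' r : (rot r' p == rot r w) = false.
    by apply/eqP => E; case/eqP: size_pw; rewrite -(size_rot r' p) E size_rot.
  rewrite big1 => [|r' _]; last by rewrite big1 // => r _; rewrite rot_neq.
  by rewrite big1 ?mulr0 // => r' _; rewrite -[w](rot0 w) rot_neq.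
rewrite size_pw; case size_w: (size w) => [|m].
  by rewrite !big_ord0 mulr0.
rewrite mulr_natl -[X in _ *+ X](card_ord m.+1) -sumr_const; apply: eq_bigr => r' _.
rewrite (reindex_inj (h := fun r : 'I_m.+1 => (r' - r)%R)); last first.
  by move=> x y /addrI /oppr_inj.
apply: eq_bigr => r _.
rewrite -(inj_eq (@rot_inj (r - r')%R _)) !rotD_ord ?size_rot ?size_pw //.
by rewrite subrK addrA subrK subrr rot0.
Qed.

End CyclicSums.

Arguments cyclic_sum {R T} f p.

Section FockCoordinates.
Variables (C : numClosedFieldType) (n : nat).

(* The coordinate of v on e_t (x) f_i is read at the word i :: t, identifying
   F(C^n) (x) C^n with the span of the e_w, w nonempty. *)
Definition coord_word (v : fvec C n) (w : seq 'I_n) : C :=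
  if w is i :: t then v i t else 0.

Lemma coord_vsub (v v' : fvec C n) w :
  coord_word (vsub v v') w = coord_word v w - coord_word v' w.
Proof. by case: w => [|i t] /=; rewrite ?subrr. Qed.

Lemma lword_ebasis (a w w' : seq 'I_n) :
  lword a (ebasis C w) w' = (w' == a ++ w)%:R.
Proof.
elim: a w' => [|j a IHa] [|j' w'] //=.
by rewrite eqseq_cons; case: eqP => //= _; apply: IHa.
Qed.

Lemma deltal1E (p : seq 'I_n) i t :
  deltal1 C p i t = \sum_(r < size p) (i :: t == rot r p)%:R.
Proof.
rewrite /deltal1 big_mkcond; apply: eq_bigr => r _.
rewrite /lword -foldr_cat -/(lword _ _) lword_ebasis cats0.
rewrite /rot (drop_nth i (ltn_ord r)) cat_cons eqseq_cons eq_sym.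
by case: (i == nth i p r).
Qed.

Lemma coord_deltal1 (p w : seq 'I_n) :
  coord_word (deltal1 C p) w = \sum_(r < size p) (w == rot r p)%:R.
Proof.
case: w => [|i t]; last exact: deltal1E.
rewrite big1 // => r _; case: eqP => // nil_rot.
by have := ltn_ord r; rewrite -[X in (_ < X)%N](size_rot r p) -nil_rot.
Qed.

Lemma deltal1_conj (p : seq 'I_n) i t : (deltal1 C p i t)^* = deltal1 C p i t.
Proof. by rewrite deltal1E -natr_sum conjC_nat. Qed.

Lemma sum_tuple_coord (v : fvec C n) k (w : seq 'I_n) :
  \sum_(i < n) \sum_(t : k.-tuple 'I_n) v i t * (i :: t == w)%:R
  = (size w == k.+1)%:R * coord_word v w.
Proof.
case: w => [|a w] /=.
  by rewrite mulr0 big1 // => i _; rewrite big1 // => t _; rewrite mulr0.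
rewrite (bigD1 a) //= [X in _ + X]big1 => [|i neq_ia]; last first.
  by rewrite big1 // => t _; rewrite eqseq_cons (negbTE neq_ia) mulr0.
rewrite addr0 eqSS; have [size_w|size_w] := eqVneq (size w) k.
  rewrite (bigD1 (Tuple (introT eqP size_w))) //= [X in _ + X]big1 => [|t neq_tw].
    by rewrite eqseq_cons !eqxx mulr1 mul1r addr0.
  rewrite eqseq_cons eqxx /=; case: eqP => [eq_tw|]; last by rewrite mulr0.
  by case/negP: neq_tw; apply/eqP/val_inj.
rewrite mul0r big1 // => t _; rewrite eqseq_cons eqxx /=; case: eqP => [eq_tw|].
  by move: size_w; rewrite -eq_tw size_tuple eqxx.
by rewrite mulr0.
Qed.

Lemma ipN_deltal1 N (v : fvec C n) (p : seq 'I_n) :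
  ipN N v (deltal1 C p)
  = \sum_(k < N) (size p == k.+1)%:R * cyclic_sum (coord_word v) p.
Proof.
rewrite /ipN exchange_big; apply: eq_bigr => k _ /=.
under eq_bigr => i _ do under eq_bigr => t _ do
  rewrite deltal1_conj deltal1E mulr_sumr.
under eq_bigr => i _ do rewrite exchange_big.
rewrite exchange_big /cyclic_sum mulr_sumr; apply: eq_bigr => r _ /=.
by rewrite sum_tuple_coord size_rot.
Qed.

Lemma ipN_deltal_image N (v s : fvec C n) :
  deltal_image s -> (forall p, cyclic_sum (coord_word v) p = 0) -> ipN N v s = 0.
Proof.
move=> [ps [c def_s]] cyclic_v0.
rewrite /ipN; under eq_bigr => i _ do under eq_bigr => k _ do
  under eq_bigr => t _ do rewrite def_s rmorph_sum mulr_sumr.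
under eq_bigr => i _ do under eq_bigr => k _ do rewrite exchange_big.
under eq_bigr => i _ do rewrite exchange_big.
rewrite exchange_big big1 // => p _.
under eq_bigr => i _ do under eq_bigr => k _ do
  under eq_bigr => t _ do rewrite rmorphM mulrCA.
under eq_bigr => i _ do under eq_bigr => k _ do rewrite -mulr_sumr.
under eq_bigr => i _ do rewrite -mulr_sumr.
rewrite -mulr_sumr -/(ipN N v (deltal1 C p)) ipN_deltal1.
by rewrite big1 ?mulr0 // => k _; rewrite cyclic_v0 mulr0.
Qed.

Lemma deltal1_bounded (p : seq 'I_n) : bounded (size p) (deltal1 C p).
Proof.
move=> i w le_p_w; rewrite deltal1E big1 // => r _; case: eqP => // eq_rot.
by move: le_p_w; rewrite -(size_rot r p) -eq_rot /= ltnn.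
Qed.

Lemma deltal_image_fin_supp (s : fvec C n) : deltal_image s -> fin_supp s.
Proof.
move=> [ps [c def_s]]; exists (\max_(p <- ps) size p)%N => i w le_ps_w.
rewrite def_s big_seq big1 // => p p_ps.
rewrite deltal1_bounded ?mulr0 //; apply: leq_trans le_ps_w.
exact: (leq_bigmax_seq _ p_ps).
Qed.

Lemma xvec_fin_supp (u : 'I_n -> seq 'I_n) : fin_supp (xvec C u).
Proof.
exists (\max_(j < n) (size (u j)).+1)%N => i w le_u_w.
rewrite /xvec /ebasis; case: eqP => // eq_w.
have := @leq_bigmax _ (fun j => (size (u j)).+1) i.
by rewrite -eq_w => /leq_trans/(_ le_u_w); rewrite ltnn.
Qed.

End FockCoordinates.

Arguments coord_word {C n} v w.

Section RotationAverage.
Variables (C : numClosedFieldType) (n : nat) (u : 'I_n -> seq 'I_n).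

Definition avg_xvec : fvec C n :=
  fun i w => \sum_(j < n) ((size (u j)).+1%:R)^-1 * deltal1 C (j :: u j) i w.

Lemma avg_xvec_deltal_image : deltal_image avg_xvec.
Proof.
exists [seq j :: u j | j <- index_enum 'I_n], (fun p => (size p)%:R^-1).
by move=> i w; rewrite big_map.
Qed.

Lemma coord_xvec w : coord_word (xvec C u) w = \sum_(j < n) (w == j :: u j)%:R.
Proof.
case: w => [|i t]; first by rewrite big1.
rewrite (bigD1 i) //= [X in _ + X]big1 ?addr0 => [|j neq_ji].
  by rewrite eqseq_cons eqxx.
by rewrite eqseq_cons eq_sym (negbTE neq_ji).
Qed.

Lemma coord_avg_xvec w :
  coord_word avg_xvec w
  = \sum_(j < n) ((size (u j)).+1%:R)^-1 * coord_word (deltal1 C (j :: u j)) w.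
Proof. by case: w => [|i t] //=; rewrite big1 // => j _; rewrite mulr0. Qed.

Lemma cyclic_sum_xvec_sub_avg p :
  cyclic_sum (coord_word (vsub (xvec C u) avg_xvec)) p = 0.
Proof.
rewrite /cyclic_sum; under eq_bigr do rewrite coord_vsub.
apply/eqP; rewrite sumrB subr_eq0 eq_sym; apply/eqP.
under eq_bigr do rewrite coord_avg_xvec.
under [RHS]eq_bigr do rewrite coord_xvec.
rewrite exchange_big [RHS]exchange_big; apply: eq_bigr => j _ /=.
under eq_bigr do rewrite coord_deltal1.
rewrite -mulr_sumr; have := cyclic_sum_rot_orbit C _ p (j :: u j).
by rewrite /cyclic_sum => ->; rewrite mulrA mulVf ?mul1r ?pnatr_eq0.
Qed.

End RotationAverage.

Theorem corollary3p4 (C : numClosedFieldType) (n : nat) (u : 'I_n -> seq 'I_n) :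
  is_orthproj_closure (@deltal_image C n) (xvec C u)
    (fun i w => \sum_(j < n) ((size (u j)).+1%:R)^-1 * deltal1 C (j :: u j) i w).
Proof.
change (is_orthproj_closure (@deltal_image C n) (xvec C u) (avg_xvec C n u)).
have avg_image := avg_xvec_deltal_image C n u.
split; [exact: xvec_fin_supp | exact: deltal_image_fin_supp | |].
- move=> eps eps_gt0; exists (avg_xvec C n u).
  split; [exact: avg_image | split; first exact: deltal_image_fin_supp].
  move=> N _ _; rewrite /ipN big1 // => i _; rewrite big1 // => k _.
  by rewrite big1 // => t _; rewrite /vsub subrr mul0r.
- move=> s s_image; split; first exact: deltal_image_fin_supp.
  move=> N _ _ _; apply: ipN_deltal_image => //.
  exact: cyclic_sum_xvec_sub_avg.
Qed.
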